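(* Let $f$ be a germ of holomorphic self-map of $\mathbb{C}^2$ tangent to the identity at the origin, of order $k+1$, having $[v]$ as a characteristic direction of degree $s$. Let $\Psi$ be a biholomorphism of $\mathbb{C}^2$ fixing the origin and, near the origin, mapping the complex line $\mathbb{C}v$ into itself. Then $\Psi^{-1}\circ f\circ\Psi$ has $[v]$ as a characteristic direction of degree $s$.
   Context: Write $f(x)=x+\sum_{j\ge k+1}P_j(x)$ with $P_j$ homogeneous of degree $j$ and $P_{k+1}\not\equiv0$ ($k+1$ is the order). $[v]$ is a characteristic direction of a homogeneous map $Q$ if $Q(v)=\lambda v$ for some $\lambda\in\mathbb{C}$, $v\neq 0$. $[v]$ is a characteristic direction of degree $s$ (for $s\ge k+1$) if it is a characteristic direction of each of $P_{k+1},\dots,P_s$. *)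

(* Formal (power-series) germs of self-maps of K^2,
   represented by their homogeneous components, as pairs of bivariate
   polynomials {poly {poly K}}. *)
From HB Require Import structures.
From mathcomp Require Import all_boot all_order all_algebra.
Set Implicit Arguments. Unset Strict Implicit. Unset Printing Implicit Defensive.
Import Order.TTheory GRing.Theory Num.Theory.
Local Open Scope ring_scope.

Section FormalMaps.
Variable K : fieldType.

(* Bivariate polynomials: outer variable Y = 'X, inner variable X = 'X%:P.
   The coefficient of X^a Y^b in p is (p`_b)`_a. *)
Definition bpoly := {poly {poly K}}.
Definition bX : bpoly := 'X%:P.
Definition bY : bpoly := 'X.

Definition beval (p : bpoly) (x y : K) : K := (p.[y%:P]).[x].

Definition bsubst (p A B : bpoly) : bpoly :=
  \sum_(b < size p) \sum_(a < size (p`_b))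
     ((p`_b)`_a)%:P%:P * A ^+ a * B ^+ b.

Definition hpart (n : nat) (p : bpoly) : bpoly :=
  \sum_(a < n.+1) ((p`_(n - a))`_a)%:P%:P * bX ^+ a * bY ^+ (n - a).

Definition homog (n : nat) (p : bpoly) : Prop := hpart n p = p.

(* A formal map K^2 -> K^2: F n is its homogeneous component of degree n. *)
Definition fmap := nat -> bpoly * bpoly.

Definition formal_map (F : fmap) : Prop :=
  forall n, homog n (F n).1 /\ homog n (F n).2.

Definition fixes0 (F : fmap) : Prop := F 0%N = (0, 0).

Definition map_eval (P : bpoly * bpoly) (v : K * K) : K * K :=
  (beval P.1 v.1 v.2, beval P.2 v.1 v.2).

Definition trunc (G : fmap) (n : nat) : bpoly * bpoly :=
  (\sum_(m < n.+1) (G m).1, \sum_(m < n.+1) (G m).2).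

(* composition F o G, for G fixing the origin:
   (F o G)_n = degree-n part of sum_{j<=n} F_j(G_{<=n}) *)
Definition fcomp (F G : fmap) : fmap := fun n =>
  let T := trunc G n in
  (hpart n (\sum_(j < n.+1) bsubst (F j).1 T.1 T.2),
   hpart n (\sum_(j < n.+1) bsubst (F j).2 T.1 T.2)).

Definition fid : fmap := fun n => if n == 1%N then (bX, bY) else (0, 0).

Definition tangent_id (F : fmap) : Prop := F 0%N = (0, 0) /\ F 1%N = (bX, bY).

Definition has_order (F : fmap) (m : nat) : Prop :=
  [/\ tangent_id F, (2 <= m)%N,
      (forall j, (2 <= j < m)%N -> F j = (0, 0)) & F m <> (0, 0)].

Definition char_dir (P : bpoly * bpoly) (v : K * K) : Prop :=
  v <> (0, 0) /\ exists l : K, map_eval P v = (l * v.1, l * v.2).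

Definition char_dir_deg (F : fmap) (s : nat) (v : K * K) : Prop :=
  exists k : nat, [/\ has_order F k.+1, (k.+1 <= s)%N &
     forall j, (k.+1 <= j <= s)%N -> char_dir (F j) v].

End FormalMaps.

(* Truncated power series in t are modelled as polynomials in 'X, and a formal
   map F is evaluated at a point z of (A[t])^2 as the sum of its homogeneous
   components of degree <= N; modulo t^(N+1) this turns [fcomp] into
   substitution (fev_comp).

   At the generic point T = (X t, Y t) the t^n coefficient of F(T) is F_n.  With
   D = (f - f_1)(Psi T) = O(t^(k+1)) one gets
     g(T) = Phi(f(Psi T)) = Phi(Psi T + D) = T + Phi_1(D)  mod t^(k+2),
   so g = Phi o f o Psi has order k+1 and g_(k+1) = Phi_1 o f_(k+1) o Psi_1, which
   is nonzero because Phi_1 and Psi_1 are inverse linear maps.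

   At the point t v, Psi maps the line K[[t]] v into itself, and so does f up to
   degree s; hence Psi(g(t v)) = f(Psi(t v)) lies on the line mod t^(s+1).  As
   Psi_1 is invertible and fixes [v], solving coefficient by coefficient shows
   that g(t v) = phi(t) v mod t^(s+1), i.e. g_j(v) is a multiple of v for j <= s. *)

From HB Require Import structures.
From mathcomp Require Import all_boot all_order all_algebra.
From mathcomp Require Import ring zify.
Import GRing.Theory.
Local Open Scope ring_scope.
Set Implicit Arguments. Unset Strict Implicit. Unset Printing Implicit Defensive.

Lemma commr_rmorph_comRing (aR : nzSemiRingType) (R : comNzRingType) (f : aR -> R) (u : R) :
  commr_rmorph f u.
Proof. by move=> x; rewrite /GRing.comm mulrC. Qed.

Definition bev (K : fieldType) (R : comNzRingType) (i : {rmorphism K -> R}) (x y : R)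
    (p : bpoly K) : R :=
  horner_morph (commr_rmorph_comRing (horner_morph (commr_rmorph_comRing i x)) y) p.

#[warnings="-redundant-canonical-projection"]
HB.instance Definition _ (K : fieldType) (R : comNzRingType) (i : {rmorphism K -> R}) (x y : R) :=
  GRing.RMorphism.copy (bev i x y)
    (horner_morph (commr_rmorph_comRing (horner_morph (commr_rmorph_comRing i x)) y)).

Definition bconst (K : fieldType) : {rmorphism K -> bpoly K} := (@polyC _) \o (@polyC _).

Section BivariateEvaluation.
Variables (K : fieldType) (R : comNzRingType) (i : {rmorphism K -> R}).
Implicit Types (p q : bpoly K) (x y : R).

Lemma bevC x y (c : K) : bev i x y c%:P%:P = i c.
Proof. by rewrite /bev; etransitivity; [exact: horner_morphC | exact: horner_morphC]. Qed.

Lemma bevX x y : bev i x y (bX K) = x.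
Proof. by rewrite /bev /bX; etransitivity; [exact: horner_morphC | exact: horner_morphX]. Qed.

Lemma bevY x y : bev i x y (bY K) = y.
Proof. exact: horner_morphX. Qed.

(* [rmorphB] does not unify through the copied instance, hence this lemma. *)
Lemma bevB x y p q : bev i x y (p - q) = bev i x y p - bev i x y q.
Proof. by rewrite /bev rmorphB. Qed.

Lemma bevE x y p : bev i x y p =
  \sum_(b < size p) \sum_(a < size p`_b) i p`_b`_a * x ^+ a * y ^+ b.
Proof.
rewrite /bev /horner_morph (horner_coef_wide _ (size_poly _ _)).
apply: eq_bigr => b _; rewrite coef_poly ltn_ord /= /horner_morph.
rewrite (horner_coef_wide _ (size_poly _ _)) mulr_suml.
by apply: eq_bigr => a _; rewrite coef_poly ltn_ord.
Qed.

Lemma bev_homogE j x y p : homog j p ->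
  bev i x y p = \sum_(a < j.+1) i p`_(j - a)`_a * x ^+ a * y ^+ (j - a).
Proof.
move=> hp; rewrite -[p in LHS]hp /hpart rmorph_sum; apply: eq_bigr => a _.
by rewrite !rmorphM !rmorphXn /= bevC bevX bevY.
Qed.

Lemma bev_homogZ j c x y p : homog j p -> bev i (c * x) (c * y) p = c ^+ j * bev i x y p.
Proof.
move=> hp; rewrite !(bev_homogE _ _ hp) mulr_sumr; apply: eq_bigr => a _.
have -> : c ^+ j = c ^+ a * c ^+ (j - a) by rewrite -exprD subnKC // -ltnS.
by rewrite !exprMn; ring.
Qed.

Lemma bev_homog1D p x y x' y' : homog 1 p ->
  bev i (x + x') (y + y') p = bev i x y p + bev i x' y' p.
Proof.
move=> hp; rewrite !(bev_homogE _ _ hp) !big_ord_recr !big_ord0 /= !add0r.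
by rewrite !expr0 !expr1 !mulr1; ring.
Qed.

End BivariateEvaluation.

Lemma bev_map (K : fieldType) (R1 R2 : comNzRingType) (i1 : {rmorphism K -> R1})
    (i2 : {rmorphism K -> R2}) (phi : {rmorphism R1 -> R2}) x y p :
  (forall c, i2 c = phi (i1 c)) -> phi (bev i1 x y p) = bev i2 (phi x) (phi y) p.
Proof.
move=> h; rewrite !bevE rmorph_sum; apply: eq_bigr => b _.
by rewrite rmorph_sum; apply: eq_bigr => a _; rewrite !rmorphM !rmorphXn h.
Qed.

Lemma bev_comp (K : fieldType) (R : comNzRingType) (i : {rmorphism K -> R}) x y p q1 q2 :
  bev i x y (bev (bconst K) q1 q2 p) = bev i (bev i x y q1) (bev i x y q2) p.
Proof. by apply: (@bev_map K _ R (bconst K) i (bev i x y)) => c; rewrite /= bevC. Qed.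

Lemma bev_bXbY (K : fieldType) (p : bpoly K) : bev (bconst K) (bX K) (bY K) p = p.
Proof.
rewrite bevE -[p in RHS]coefK poly_def; apply: eq_bigr => b _.
rewrite /bY -mul_polyC -mulr_suml; congr (_ * _).
rewrite -[p`_b in RHS]coefK poly_def rmorph_sum; apply: eq_bigr => a _.
by rewrite /bX /= -mul_polyC -rmorphXn -rmorphM.
Qed.

Lemma beval_bev (K : fieldType) (p : bpoly K) x y : beval p x y = bev idfun x y p.
Proof.
rewrite bevE /beval (horner_coef p) -[_.[x]]/(horner_eval x _) rmorph_sum.
apply: eq_bigr => b _; rewrite rmorphM rmorphXn /= /horner_eval hornerC (horner_coef p`_b).
rewrite mulr_suml.
by apply: eq_bigr => a _.
Qed.

Section HomogeneousParts.
Variable K : fieldType.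
Implicit Types p q : bpoly K.

Lemma bpolyP p q : (forall a b, p`_b`_a = q`_b`_a) -> p = q.
Proof. by move=> h; apply/polyP => b; apply/polyP => a; apply: h. Qed.

Definition bmonomial (c : K) (a b : nat) : bpoly K := c%:P%:P * bX K ^+ a * bY K ^+ b.

Lemma coef_bmonomial c a b m n :
  (bmonomial c a b)`_n`_m = if (m == a) && (n == b) then c else 0.
Proof.
rewrite /bmonomial /bX /bY -rmorphXn -rmorphM coefMXn.
case: ltnP => hnb.
  by rewrite coef0 (_ : (n == b) = false) ?andbF //; apply/negbTE; rewrite neq_ltn hnb.
rewrite coefC subn_eq0; have -> : (n == b) = (n <= b)%N by rewrite eqn_leq hnb andbT.
case: (n <= b)%N; last by rewrite andbF coef0.
by rewrite andbT coefCM coefXn; case: (m == a); rewrite ?mulr1 ?mulr0.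
Qed.

Lemma hpart_coef n p a b : (hpart n p)`_b`_a = if (a + b == n)%N then p`_b`_a else 0.
Proof.
rewrite /hpart !coef_sum.
case: eqP => hab; last first.
  apply: big1 => j _; rewrite -/(bmonomial _ _ _) coef_bmonomial.
  case: eqP => //= haj; case: eqP => // hb.
  by case: hab; rewrite haj hb subnKC // -ltnS.
have ha : (a < n.+1)%N by rewrite -hab ltnS leq_addr.
rewrite (bigD1 (Ordinal ha)) //= big1 ?addr0.
  by rewrite -/(bmonomial _ _ _) coef_bmonomial eqxx -hab addKn eqxx.
move=> j hj; rewrite -/(bmonomial _ _ _) coef_bmonomial; case: eqP => // haj.
by move: hj; rewrite -(inj_eq val_inj) /= haj eqxx.
Qed.

Lemma hpart_is_zmod_morphism n : zmod_morphism (@hpart K n).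
Proof.
move=> p q; apply: bpolyP => a b.
by rewrite !(coefB, hpart_coef); case: (_ == _); rewrite ?subr0.
Qed.


Lemma hpart_id n m p : hpart n (hpart m p) = if n == m then hpart m p else 0.
Proof.
apply: bpolyP => a b; rewrite hpart_coef.
case: (n =P m) => [->|hnm]; first by rewrite hpart_coef; case: (_ == _).
rewrite !coef0 hpart_coef; case: (a + b =P n) => // h1; case: (a + b =P m) => // h2.
by case: hnm; rewrite -h1 -h2.
Qed.

Lemma homog_hpart n p : homog n (hpart n p).
Proof. by rewrite /homog hpart_id eqxx. Qed.

Lemma hpart_bmonomial n c a b :
  hpart n (bmonomial c a b) = if (a + b == n)%N then bmonomial c a b else 0.
Proof.
apply: bpolyP => a' b'; rewrite hpart_coef.
case: (boolP (a + b == n)%N) => hn; rewrite ?coef0 !coef_bmonomial;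
  case: (a' =P a) => [->|]; case: (b' =P b) => [->|] //=; rewrite ?hn ?(negbTE hn) //.
all: by case: ifP.
Qed.

Lemma bmonomial_expansion p :
  p = \sum_(b < size p) \sum_(a < size p`_b) bmonomial p`_b`_a a b.
Proof. by rewrite -[p in LHS]bev_bXbY bevE. Qed.

End HomogeneousParts.

#[warnings="-redundant-canonical-projection"]
HB.instance Definition _ (K : fieldType) (n : nat) :=
  GRing.isZmodMorphism.Build {poly {poly K}} {poly {poly K}} (@hpart K n)
    (@hpart_is_zmod_morphism K n).

Section XDivisibility.
Variable A : comNzRingType.
Implicit Types u w x y : {poly A}.

Definition Xdvd (m : nat) u := exists w, u = 'X^m * w.

Lemma Xdvd0 m : Xdvd m 0.
Proof. by exists 0; rewrite mulr0. Qed.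

Lemma XdvdD m u w : Xdvd m u -> Xdvd m w -> Xdvd m (u + w).
Proof. by move=> [u' ->] [w' ->]; exists (u' + w'); rewrite mulrDr. Qed.

Lemma XdvdN m u : Xdvd m u -> Xdvd m (- u).
Proof. by move=> [u' ->]; exists (- u'); rewrite mulrN. Qed.

Lemma XdvdB m u w : Xdvd m u -> Xdvd m w -> Xdvd m (u - w).
Proof. by move=> hu hw; apply/XdvdD/XdvdN. Qed.

Lemma XdvdMl m u w : Xdvd m u -> Xdvd m (w * u).
Proof. by move=> [u' ->]; exists (w * u'); rewrite mulrCA. Qed.

Lemma XdvdMr m u w : Xdvd m u -> Xdvd m (u * w).
Proof. by move=> h; rewrite mulrC; apply: XdvdMl. Qed.

Lemma XdvdM m n u w : Xdvd m u -> Xdvd n w -> Xdvd (m + n) (u * w).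
Proof. by move=> [u' ->] [w' ->]; exists (u' * w'); rewrite exprD; ring. Qed.

Lemma Xdvd_Xn m : Xdvd m 'X^m.
Proof. by exists 1; rewrite mulr1. Qed.

Lemma Xdvd_leq m n u : (m <= n)%N -> Xdvd n u -> Xdvd m u.
Proof. by move=> h [u' ->]; exists ('X^(n - m) * u'); rewrite mulrA -exprD subnKC. Qed.

Lemma Xdvd_sum m (I : Type) (r : seq I) (P : pred I) (F : I -> {poly A}) :
  (forall j, P j -> Xdvd m (F j)) -> Xdvd m (\sum_(j <- r | P j) F j).
Proof.
by move=> h; elim/big_rec: _ => [|j u Pj hu]; [apply: Xdvd0 | apply/XdvdD/hu/h].
Qed.

Lemma Xdvd1_exp k u : Xdvd 1 u -> Xdvd k (u ^+ k).
Proof. by move=> [u' ->]; exists (u' ^+ k); rewrite exprMn -exprM mul1n. Qed.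

Lemma XdvdP m u : Xdvd m u <-> forall i, (i < m)%N -> u`_i = 0.
Proof.
split=> [[u' ->] i hi|h]; first by rewrite coefXnM hi.
exists (drop_poly m u); rewrite mulrC -[u in LHS](poly_take_drop m).
suff -> : take_poly m u = 0 by rewrite add0r.
by apply/polyP => i; rewrite coef_take_poly coef0; case: ifP => // /h.
Qed.

Lemma Xdvd_coef_eq n u w : Xdvd n.+1 (u - w) -> u`_n = w`_n.
Proof. by move/XdvdP/(_ n (ltnSn n))/eqP; rewrite coefB subr_eq0 => /eqP. Qed.

Lemma Xdvd_powD_sub m a x (D : {poly A}) :
  (0 < m)%N -> Xdvd 1 x -> Xdvd m D -> (0 < a)%N ->
  Xdvd (m + a.-1) ((x + D) ^+ a - x ^+ a).
Proof.
move=> hm hx hD ha; rewrite subrXX addrC addKr; apply: XdvdM => //.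
have hxD : Xdvd 1 (x + D) by apply: XdvdD => //; apply: Xdvd_leq hD.
apply: Xdvd_sum => l _; apply: (@Xdvd_leq _ ((a.-1 - l) + l)).
  by rewrite subnK // -ltnS prednK.
exact: XdvdM (Xdvd1_exp _ hxD) (Xdvd1_exp _ hx).
Qed.

Lemma Xdvd_monomialD_sub m a b x y (D D' : {poly A}) :
  (0 < m)%N -> Xdvd 1 x -> Xdvd 1 y -> Xdvd m D -> Xdvd m D' -> (2 <= a + b)%N ->
  Xdvd m.+1 ((x + D) ^+ a * (y + D') ^+ b - x ^+ a * y ^+ b).
Proof.
move=> hm hx hy hD hD' hab.
have hyD : Xdvd 1 (y + D') by apply: XdvdD => //; apply: Xdvd_leq hD'.
have -> : (x + D) ^+ a * (y + D') ^+ b - x ^+ a * y ^+ b =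
  ((x + D) ^+ a - x ^+ a) * (y + D') ^+ b + x ^+ a * ((y + D') ^+ b - y ^+ b) by ring.
apply: XdvdD.
  case: a hab => [|a] hab; first by rewrite !expr0 subrr mul0r; apply: Xdvd0.
  apply: (@Xdvd_leq _ (m + a.+1.-1 + b)); first by rewrite /=; lia.
  by apply: XdvdM; [apply: Xdvd_powD_sub | apply: Xdvd1_exp].
case: b hab => [|b] hab; first by rewrite !expr0 subrr mulr0; apply: Xdvd0.
apply: (@Xdvd_leq _ (a + (m + b.+1.-1))); first by rewrite /=; lia.
by apply: XdvdM; [apply: Xdvd1_exp | apply: Xdvd_powD_sub].
Qed.

End XDivisibility.

Section EvaluationOrder.
Variables (K : fieldType) (A : comNzRingType) (i : {rmorphism K -> {poly A}}).
Implicit Types (p : bpoly K) (x y : {poly A}).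

Lemma bev_congr m p x y x' y' : Xdvd m (x - x') -> Xdvd m (y - y') ->
  Xdvd m (bev i x y p - bev i x' y' p).
Proof.
move=> hx hy; rewrite !bevE -sumrB; apply: Xdvd_sum => b _.
rewrite -sumrB; apply: Xdvd_sum => a _.
have -> : i p`_b`_a * x ^+ a * y ^+ b - i p`_b`_a * x' ^+ a * y' ^+ b =
  i p`_b`_a * ((x ^+ a - x' ^+ a) * y ^+ b + x' ^+ a * (y ^+ b - y' ^+ b)) by ring.
by apply/XdvdMl/XdvdD; [apply: XdvdMr | apply: XdvdMl]; rewrite subrXX; apply: XdvdMr.
Qed.

Lemma bev_homog_Xdvd j m p x y : homog j p -> Xdvd m x -> Xdvd m y ->
  Xdvd (m * j) (bev i x y p).
Proof.
by move=> hp [x' ->] [y' ->]; rewrite (bev_homogZ _ _ _ _ hp) -exprM; apply/XdvdMr/Xdvd_Xn.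
Qed.

Lemma bev_Xdvd_hpart N p x y : (forall n, (n <= N)%N -> hpart n p = 0) ->
  Xdvd 1 x -> Xdvd 1 y -> Xdvd N.+1 (bev i x y p).
Proof.
move=> hp hx hy; rewrite bevE; apply: Xdvd_sum => b _; apply: Xdvd_sum => a _.
case: (leqP (a + b) N) => hab.
  have : (hpart (a + b) p)`_b`_a = 0 by rewrite hp // !coef0.
  by rewrite hpart_coef eqxx => ->; rewrite rmorph0 !mul0r; apply: Xdvd0.
rewrite -mulrA; apply/XdvdMl/(Xdvd_leq hab).
exact: XdvdM (Xdvd1_exp a hx) (Xdvd1_exp b hy).
Qed.

Lemma bev_taylor j m p x y (D D' : {poly A}) : homog j p -> j != 1%N -> (0 < m)%N ->
  Xdvd 1 x -> Xdvd 1 y -> Xdvd m D -> Xdvd m D' ->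
  Xdvd m.+1 (bev i (x + D) (y + D') p - bev i x y p).
Proof.
move=> hp hj hm hx hy hD hD'; rewrite !(bev_homogE _ _ _ hp) -sumrB.
apply: Xdvd_sum => a _; rewrite -!mulrA -mulrBr; apply: XdvdMl.
case: j hj hp a => [|[|j]] // _ hp a.
  by rewrite ord1 !expr0 subrr; apply: Xdvd0.
apply: Xdvd_monomialD_sub => //; have := ltn_ord a; lia.
Qed.

Variable i0 : {rmorphism K -> A}.
Hypothesis i_const : forall c, i c = (i0 c)%:P.

Lemma coef_bev_homog j m p x y : homog j p -> Xdvd m x -> Xdvd m y ->
  (bev i x y p)`_(m * j) = bev i0 x`_m y`_m p.
Proof.
move=> hp [x' ->] [y' ->].
rewrite (bev_homogZ _ _ _ _ hp) -exprM !coefXnM !ltnn !subnn -!horner_coef0.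
apply: (@bev_map _ _ _ i i0 (horner_eval 0)) => c.
by rewrite /= i_const /horner_eval hornerC.
Qed.

Lemma coef_bev_homog1 n p x y : homog 1 p -> (bev i x y p)`_n = bev i0 x`_n y`_n p.
Proof.
move=> hp; rewrite !(bev_homogE _ _ _ hp) !big_ord_recr !big_ord0 /= !add0r.
by rewrite coefD !i_const !expr0 !expr1 !mulr1 !coefCM.
Qed.

End EvaluationOrder.

Section TruncatedEvaluation.
Variable K : fieldType.
Implicit Types (p : bpoly K) (P : nat -> bpoly K).

Definition tconst : {rmorphism K -> {poly bpoly K}} := (@polyC _) \o bconst K.
Definition tX : {poly bpoly K} := (bX K)%:P * 'X.
Definition tY : {poly bpoly K} := (bY K)%:P * 'X.

Definition tscale p : {poly bpoly K} := bev tconst tX tY p.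

Lemma coef_tscale n p : (tscale p)`_n = hpart n p.
Proof.
rewrite [p in RHS]bmonomial_expansion raddf_sum /tscale bevE coef_sum.
apply: eq_bigr => b _; rewrite raddf_sum coef_sum; apply: eq_bigr => a _ /=.
rewrite hpart_bmonomial.
have -> : tconst p`_b`_a * tX ^+ a * tY ^+ b = (bmonomial p`_b`_a a b)%:P * 'X^(a + b).
  by rewrite /tX /tY /bmonomial /= !exprMn exprD !rmorphM !rmorphXn; ring.
by rewrite coefCM coefXn eq_sym; case: eqP; rewrite ?mulr1 ?mulr0.
Qed.

Lemma tscale_homog n p : homog n p -> tscale p = p%:P * 'X^n.
Proof.
move=> hp; rewrite /tscale /tX /tY ![_ * 'X]mulrC (bev_homogZ _ _ _ _ hp) mulrC.
congr (_ * _); rewrite -[p in RHS]bev_bXbY.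
by rewrite (@bev_map _ _ _ (bconst K) tconst polyC).
Qed.

Definition fseries P := forall n, homog n (P n).

Definition tseries P N : {poly bpoly K} := \sum_(m < N.+1) (P m)%:P * 'X^m.

Lemma coef_tseries P N n : (n <= N)%N -> (tseries P N)`_n = P n.
Proof.
move=> hn; rewrite /tseries coef_sum (bigD1 (Ordinal (hn : n < N.+1)%N)) //= big1.
  by rewrite addr0 coefCM coefXn eqxx mulr1.
move=> j hj; rewrite coefCM coefXn; case: eqP => [e|]; last by rewrite mulr0.
by move: hj; rewrite -(inj_eq val_inj) /= e eqxx.
Qed.

Lemma tseries_Xdvd1 P N : P 0%N = 0 -> Xdvd 1 (tseries P N).
Proof.
move=> P0; apply: Xdvd_sum => -[[|m] hm] _ /=; first by rewrite P0 mul0r; apply: Xdvd0.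
by apply/XdvdMl/(@Xdvd_leq _ _ m.+1)/Xdvd_Xn.
Qed.

Lemma sum_ord_split (V : nmodType) n N (F : nat -> V) : (n <= N)%N ->
  \sum_(j < N.+1) F j = \sum_(j < n.+1) F j + \sum_(n.+1 <= j < N.+1) F j.
Proof. by move=> hn; rewrite -!(big_mkord xpredT) (big_cat_nat _ (n := n.+1)). Qed.

Lemma tseries_sub P n N : (n <= N)%N -> Xdvd n.+1 (tseries P N - tseries P n).
Proof.
move=> hn; rewrite /tseries (sum_ord_split (fun m => (P m)%:P * 'X^m) hn) addrC addKr.
rewrite big_nat_cond; apply: Xdvd_sum => j /andP [/andP [hj _] _].
exact/XdvdMl/(Xdvd_leq hj)/Xdvd_Xn.
Qed.

Lemma tscale_sum P n : fseries P -> tscale (\sum_(m < n.+1) P m) = tseries P n.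
Proof.
by move=> hP; rewrite /tscale rmorph_sum; apply: eq_bigr => m _; apply: tscale_homog.
Qed.

End TruncatedEvaluation.

Definition fev (K : fieldType) (R : comNzRingType) (i : {rmorphism K -> R})
    (P : nat -> bpoly K) (N : nat) (x y : R) : R :=
  \sum_(j < N.+1) bev i x y (P j).

Definition fcomp_coord (K : fieldType) (P G1 G2 : nat -> bpoly K) (n : nat) : bpoly K :=
  hpart n (\sum_(j < n.+1) bsubst (P j) (\sum_(m < n.+1) G1 m) (\sum_(m < n.+1) G2 m)).

Section CompositionLaw.
Variable K : fieldType.
Implicit Types (p : bpoly K) (P : nat -> bpoly K).

Lemma bsubst_bev p B C : bsubst p B C = bev (bconst K) B C p.
Proof. by rewrite bevE. Qed.

Lemma fev_generic P N : fseries P -> fev (tconst K) P N (tX K) (tY K) = tseries P N.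
Proof. by move=> hP; apply: eq_bigr => j _; rewrite -tscale_homog. Qed.

Lemma tscale_bsubst_sum P G1 G2 n : fseries G1 -> fseries G2 ->
  tscale (\sum_(j < n.+1) bsubst (P j) (\sum_(m < n.+1) G1 m) (\sum_(m < n.+1) G2 m)) =
  fev (tconst K) P n (tseries G1 n) (tseries G2 n).
Proof.
move=> h1 h2; rewrite /tscale rmorph_sum /=; apply: eq_bigr => j _.
by rewrite bsubst_bev bev_comp -!/(tscale _) !tscale_sum.
Qed.

Lemma fcomp_coordE P G1 G2 n N : fseries P -> fseries G1 -> fseries G2 ->
  G1 0%N = 0 -> G2 0%N = 0 -> (n <= N)%N ->
  fcomp_coord P G1 G2 n = (fev (tconst K) P N (tseries G1 N) (tseries G2 N))`_n.
Proof.
move=> hP h1 h2 z1 z2 hn; rewrite /fcomp_coord -coef_tscale tscale_bsubst_sum //.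
symmetry; apply: Xdvd_coef_eq.
rewrite /fev (sum_ord_split (fun j => bev (tconst K) _ _ (P j)) hn) addrAC -sumrB.
apply: XdvdD; first by apply: Xdvd_sum => j _; apply: bev_congr; apply: tseries_sub.
rewrite big_nat_cond; apply: Xdvd_sum => j /andP [/andP [hj _] _].
apply: (Xdvd_leq hj); rewrite -[j in Xdvd j]mul1n.
exact: bev_homog_Xdvd (hP j) (tseries_Xdvd1 N z1) (tseries_Xdvd1 N z2).
Qed.

Lemma hpart_fcomp_coord_sum P G1 G2 n N : (n <= N)%N ->
  hpart n (\sum_(m < N.+1) fcomp_coord P G1 G2 m) = fcomp_coord P G1 G2 n.
Proof.
move=> hn; rewrite raddf_sum (bigD1 (Ordinal (hn : n < N.+1)%N)) //= big1.
  by rewrite addr0 /fcomp_coord hpart_id eqxx.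
move=> j hj; rewrite /fcomp_coord hpart_id; case: eqP => // e.
by move: hj; rewrite -(inj_eq val_inj) /= e eqxx.
Qed.

Lemma fev_comp (A : comNzRingType) (i : {rmorphism K -> {poly A}}) P G1 G2 N x y :
  fseries P -> fseries G1 -> fseries G2 -> G1 0%N = 0 -> G2 0%N = 0 ->
  Xdvd 1 x -> Xdvd 1 y ->
  Xdvd N.+1 (fev i P N (fev i G1 N x y) (fev i G2 N x y) - fev i (fcomp_coord P G1 G2) N x y).
Proof.
move=> hP h1 h2 z1 z2 hx hy.
set T1 := \sum_(m < N.+1) G1 m; set T2 := \sum_(m < N.+1) G2 m.
have -> : fev i P N (fev i G1 N x y) (fev i G2 N x y) =
    bev i x y (\sum_(j < N.+1) bsubst (P j) T1 T2).
  rewrite rmorph_sum /=; apply: eq_bigr => j _.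
  by rewrite bsubst_bev bev_comp /T1 /T2 !rmorph_sum.
set Y := \sum_(j < N.+1) fcomp_coord P G1 G2 j.
have -> : fev i (fcomp_coord P G1 G2) N x y = bev i x y Y by rewrite /Y rmorph_sum.
rewrite -bevB; apply: bev_Xdvd_hpart => // n hn.
rewrite raddfB /= hpart_fcomp_coord_sum // -coef_tscale tscale_bsubst_sum //.
by rewrite -(fcomp_coordE hP h1 h2 z1 z2 hn) subrr.
Qed.

End CompositionLaw.

Section TruncatedEvaluationOrder.
Variables (K : fieldType) (A : comNzRingType) (i : {rmorphism K -> {poly A}}).
Implicit Types (P : nat -> bpoly K) (x y : {poly A}).

Lemma fev_congr m P N x y x' y' : Xdvd m (x - x') -> Xdvd m (y - y') ->
  Xdvd m (fev i P N x y - fev i P N x' y').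
Proof. by move=> hx hy; rewrite /fev -sumrB; apply: Xdvd_sum => j _; apply: bev_congr. Qed.

Lemma fev_Xdvd_low P N k x y : fseries P -> (forall j, (j <= k)%N -> P j = 0) ->
  Xdvd 1 x -> Xdvd 1 y -> Xdvd k.+1 (fev i P N x y).
Proof.
move=> hP P0 hx hy; apply: Xdvd_sum => j _.
case: (leqP j k) => hj; first by rewrite P0 // rmorph0; apply: Xdvd0.
by apply: (Xdvd_leq hj); rewrite -[j in Xdvd j]mul1n; apply: bev_homog_Xdvd.
Qed.

Lemma fev_taylor m P N x y (D D' : {poly A}) : fseries P -> (0 < N)%N -> (0 < m)%N ->
  Xdvd 1 x -> Xdvd 1 y -> Xdvd m D -> Xdvd m D' ->
  Xdvd m.+1 (fev i P N (x + D) (y + D') - fev i P N x y - bev i D D' (P 1%N)).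
Proof.
move=> hP hN hm hx hy hD hD'; rewrite /fev -sumrB (bigD1 (Ordinal (hN : 1 < N.+1)%N)) //=.
rewrite bev_homog1D // (addrC (bev i x y _)) addrK addrC addrK.
by apply: Xdvd_sum => j hj; apply: bev_taylor.
Qed.

Variable i0 : {rmorphism K -> A}.
Hypothesis i_const : forall c, i c = (i0 c)%:P.

Lemma coef_fev_low P N k x y : fseries P -> (forall j, (j <= k)%N -> P j = 0) ->
  Xdvd 1 x -> Xdvd 1 y -> (k < N)%N -> (fev i P N x y)`_k.+1 = bev i0 x`_1 y`_1 (P k.+1).
Proof.
move=> hP P0 hx hy hk.
rewrite /fev (sum_ord_split (fun j => bev i x y (P j)) hk) coefD.
set tail := \sum_(k.+2 <= j < N.+1) _.
have -> : tail`_k.+1 = 0.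
  apply: (proj1 (XdvdP k.+2 tail)) => //; rewrite /tail big_nat_cond.
  apply: Xdvd_sum => j /andP [/andP [hj _] _]; apply: (Xdvd_leq hj).
  by rewrite -[j in Xdvd j]mul1n; apply: bev_homog_Xdvd.
rewrite addr0 big_ord_recr /= big1 ?add0r; last by move=> j _; rewrite P0 ?rmorph0 // -ltnS.
by rewrite -(coef_bev_homog i_const (hP _) hx hy) mul1n.
Qed.

End TruncatedEvaluationOrder.

Lemma pairD (V : nmodType) (a b c d : V) : (a, b) + (c, d) = (a + c, b + d).
Proof. by []. Qed.

Section PairDivisibility.
Variable A : comNzRingType.
Implicit Types z w : {poly A} * {poly A}.

Definition pXdvd (m : nat) z := Xdvd m z.1 /\ Xdvd m z.2.

Definition pcoef z (n : nat) : A * A := (z.1`_n, z.2`_n).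

Lemma pXdvdD m z w : pXdvd m z -> pXdvd m w -> pXdvd m (z + w).
Proof. by move=> [h1 h2] [k1 k2]; split; apply: XdvdD. Qed.

Lemma pXdvdB m z w : pXdvd m z -> pXdvd m w -> pXdvd m (z - w).
Proof. by move=> [h1 h2] [k1 k2]; split; apply: XdvdB. Qed.

Lemma pXdvd_leq m n z : (m <= n)%N -> pXdvd n z -> pXdvd m z.
Proof. by move=> h [h1 h2]; split; apply: Xdvd_leq h _. Qed.

Lemma pXdvdP m z : pXdvd m z <-> forall n, (n < m)%N -> pcoef z n = 0.
Proof.
split=> [[/XdvdP h1 /XdvdP h2] n hn|h]; first by rewrite /pcoef h1 ?h2.
by split; apply/XdvdP => n /h [].
Qed.

Lemma pcoefB z w n : pcoef (z - w) n = pcoef z n - pcoef w n.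
Proof. by rewrite /pcoef /= !coefB. Qed.

Lemma pcoefD z w n : pcoef (z + w) n = pcoef z n + pcoef w n.
Proof. by rewrite /pcoef /= !coefD. Qed.

Lemma pcoef_eq m n z w : pXdvd m (z - w) -> (n < m)%N -> pcoef z n = pcoef w n.
Proof. by move/pXdvdP=> h /h /eqP; rewrite pcoefB subr_eq0 => /eqP. Qed.

End PairDivisibility.

Section PolynomialMaps.
Variable K : fieldType.
Implicit Types P Q S : bpoly K * bpoly K.

Definition pmap_eval (R : comNzRingType) (i : {rmorphism K -> R}) P (z : R * R) : R * R :=
  (bev i z.1 z.2 P.1, bev i z.1 z.2 P.2).

Definition pcomp P Q := pmap_eval (bconst K) P Q.

Definition plinear P := homog 1 P.1 /\ homog 1 P.2.

Lemma pmap_eval_comp (R : comNzRingType) (i : {rmorphism K -> R}) P Q z :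
  pmap_eval i (pcomp P Q) z = pmap_eval i P (pmap_eval i Q z).
Proof. by rewrite /pmap_eval /= !bev_comp. Qed.

Lemma pcompA P Q S : pcomp P (pcomp Q S) = pcomp (pcomp P Q) S.
Proof. by rewrite /pcomp pmap_eval_comp. Qed.

Lemma pcomp_id P : pcomp P (bX K, bY K) = P.
Proof. by rewrite /pcomp /pmap_eval /= !bev_bXbY -surjective_pairing. Qed.

Lemma pmap_eval_linear0 (R : comNzRingType) (i : {rmorphism K -> R}) P :
  plinear P -> pmap_eval i P 0 = 0.
Proof.
move=> [h1 h2]; rewrite /pmap_eval /= -(mul0r (0 : R)).
by rewrite (bev_homogZ _ _ _ _ h1) (bev_homogZ _ _ _ _ h2) expr1 !mul0r.
Qed.

Lemma map_eval_pmap P (v : K * K) : map_eval P v = pmap_eval idfun P v.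
Proof. by rewrite /map_eval /pmap_eval !beval_bev. Qed.

Lemma pmap_eval_id (R : comNzRingType) (i : {rmorphism K -> R}) z :
  pmap_eval i (bX K, bY K) z = z.
Proof. by rewrite /pmap_eval /= bevX bevY -surjective_pairing. Qed.

Lemma pcomp_idl P : pcomp (bX K, bY K) P = P.
Proof. exact: pmap_eval_id. Qed.

Lemma pcomp0l P : pcomp 0 P = 0.
Proof. by rewrite /pcomp /pmap_eval /= !rmorph0. Qed.

Lemma linear_conj_eq0 P L M : plinear L ->
  pcomp L M = (bX K, bY K) -> pcomp M (pcomp P L) = 0 -> P = 0.
Proof.
move=> hL LM MPL.
have PL0 : pcomp P L = 0.
  by rewrite -[pcomp P L]pcomp_idl -LM -pcompA MPL /pcomp pmap_eval_linear0.
by rewrite -[P]pcomp_id -LM pcompA PL0 pcomp0l.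
Qed.

End PolynomialMaps.

Section FormalMapEvaluation.
Variable K : fieldType.
Implicit Types (F G Phi Psi : fmap K).

Definition fmap_fst F : nat -> bpoly K := fun n => (F n).1.
Definition fmap_snd F : nat -> bpoly K := fun n => (F n).2.

Definition fmap_eval (R : comNzRingType) (i : {rmorphism K -> R}) F N (z : R * R) : R * R :=
  (fev i (fmap_fst F) N z.1 z.2, fev i (fmap_snd F) N z.1 z.2).

Definition nonlinear_part F : fmap K := fun n => if n == 1%N then (0, 0) else F n.

Lemma fseries_fst F : formal_map F -> fseries (fmap_fst F).
Proof. by move=> hF n; case: (hF n). Qed.

Lemma fseries_snd F : formal_map F -> fseries (fmap_snd F).
Proof. by move=> hF n; case: (hF n). Qed.

Lemma formal_map_fcomp F G : formal_map (fcomp F G).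
Proof. by move=> n; split; apply: homog_hpart. Qed.

Lemma fixes0_fcomp F G : fixes0 F -> fixes0 (fcomp F G).
Proof.
by move=> F0; rewrite /fixes0 /fcomp /= !big_ord1 F0 /= !bsubst_bev !rmorph0 !raddf0.
Qed.

Lemma formal_map_nonlinear F : formal_map F -> formal_map (nonlinear_part F).
Proof. by move=> hF n; rewrite /nonlinear_part; case: (n == 1%N) => //; split; apply: raddf0. Qed.

Lemma fmap_eval0 (R : comNzRingType) (i : {rmorphism K -> R}) F z :
  fmap_eval i F 0 z = pmap_eval i (F 0%N) z.
Proof. by rewrite /fmap_eval /fev !big_ord1. Qed.

Lemma fmap_eval_recr (R : comNzRingType) (i : {rmorphism K -> R}) F N z :
  fmap_eval i F N.+1 z = fmap_eval i F N z + pmap_eval i (F N.+1) z.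
Proof. by rewrite /fmap_eval /fev !big_ord_recr. Qed.

Lemma fev_split1 (R : comNzRingType) (i : {rmorphism K -> R}) P Q N x y : (0 < N)%N ->
  (forall j, j != 1%N -> P j = Q j) -> Q 1%N = 0 ->
  fev i P N x y = bev i x y (P 1%N) + fev i Q N x y.
Proof.
move=> hN PQ Q1; rewrite /fev (bigD1 (Ordinal (hN : 1 < N.+1)%N)) //=.
rewrite [in RHS](bigD1 (Ordinal (hN : 1 < N.+1)%N)) //= Q1 rmorph0 add0r.
by congr (_ + _); apply: eq_bigr => j; rewrite -(inj_eq val_inj) => /PQ ->.
Qed.

Lemma fmap_eval_split1 (R : comNzRingType) (i : {rmorphism K -> R}) F N z : (0 < N)%N ->
  fmap_eval i F N z = pmap_eval i (F 1%N) z + fmap_eval i (nonlinear_part F) N z.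
Proof.
move=> hN; rewrite /fmap_eval.
rewrite (fev_split1 (P := fmap_fst F) (Q := fmap_fst (nonlinear_part F)) _ _ _ hN).
- rewrite (fev_split1 (P := fmap_snd F) (Q := fmap_snd (nonlinear_part F)) _ _ _ hN) //.
  by move=> j /negbTE j1; rewrite /fmap_snd /nonlinear_part j1.
- by move=> j /negbTE j1; rewrite /fmap_fst /nonlinear_part j1.
- by [].
Qed.

Lemma fmap_eval_fid (R : comNzRingType) (i : {rmorphism K -> R}) N z : (0 < N)%N ->
  fmap_eval i (fid K) N z = z.
Proof.
move=> hN; rewrite (fmap_eval_split1 _ _ _ hN) /pmap_eval /= bevX bevY.
rewrite /fmap_eval /fev !big1 ?addr0 -?surjective_pairing // => j _;
  by rewrite /nonlinear_part /fmap_fst /fmap_snd /fid; case: ifP => [_|->] /=; apply: rmorph0.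
Qed.

Lemma fmap_eval_generic F N : formal_map F ->
  fmap_eval (tconst K) F N (tX K, tY K) = (tseries (fmap_fst F) N, tseries (fmap_snd F) N).
Proof.
by move=> hF; rewrite /fmap_eval !fev_generic //; [apply: fseries_snd | apply: fseries_fst].
Qed.

Section PowerSeriesPoints.
Variables (A : comNzRingType) (i : {rmorphism K -> {poly A}}).
Implicit Types z d : {poly A} * {poly A}.

Lemma fmap_eval_comp F G N z : formal_map F -> formal_map G -> fixes0 G -> pXdvd 1 z ->
  pXdvd N.+1 (fmap_eval i F N (fmap_eval i G N z) - fmap_eval i (fcomp F G) N z).
Proof.
move=> hF hG G0 [hz1 hz2].
have G10 : fmap_fst G 0%N = 0 by rewrite /fmap_fst G0.
have G20 : fmap_snd G 0%N = 0 by rewrite /fmap_snd G0.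
have hG1 := fseries_fst hG; have hG2 := fseries_snd hG.
split; first exact: (fev_comp i N (fseries_fst hF) hG1 hG2 G10 G20 hz1 hz2).
exact: (fev_comp i N (fseries_snd hF) hG1 hG2 G10 G20 hz1 hz2).
Qed.

Lemma fmap_eval_congr m F N z w : pXdvd m (z - w) ->
  pXdvd m (fmap_eval i F N z - fmap_eval i F N w).
Proof. by move=> [h1 h2]; split; apply: fev_congr. Qed.

Lemma fmap_eval_inverse Phi Psi N z : formal_map Phi -> formal_map Psi -> fixes0 Psi ->
  (forall n, fcomp Phi Psi n = fid K n) -> (0 < N)%N -> pXdvd 1 z ->
  pXdvd N.+1 (fmap_eval i Phi N (fmap_eval i Psi N z) - z).
Proof.
move=> hPhi hPsi Psi0 inv hN hz.
have e : fmap_eval i (fcomp Phi Psi) N z = z.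
  rewrite -[RHS](fmap_eval_fid i z hN) /fmap_eval /fev.
  by congr pair; apply: eq_bigr => j _; rewrite /fmap_fst /fmap_snd inv.
by rewrite -{2}e; apply: fmap_eval_comp.
Qed.

Lemma fmap_eval_taylor m F N z d : formal_map F -> (0 < N)%N -> (0 < m)%N ->
  pXdvd 1 z -> pXdvd m d ->
  pXdvd m.+1 (fmap_eval i F N (z + d) - fmap_eval i F N z - pmap_eval i (F 1%N) d).
Proof.
move=> hF hN hm [hz1 hz2] [hd1 hd2].
by split; apply: fev_taylor => //; [apply: fseries_fst | apply: fseries_snd].
Qed.

Lemma fmap_eval_low F N k z : formal_map F -> (forall j, (j <= k)%N -> F j = (0, 0)) ->
  pXdvd 1 z -> pXdvd k.+1 (fmap_eval i F N z).
Proof.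
move=> hF F0 [hz1 hz2].
have F10 j : (j <= k)%N -> fmap_fst F j = 0 by move/F0; rewrite /fmap_fst => ->.
have F20 j : (j <= k)%N -> fmap_snd F j = 0 by move/F0; rewrite /fmap_snd => ->.
split; first exact: (fev_Xdvd_low i N (fseries_fst hF) F10 hz1 hz2).
exact: (fev_Xdvd_low i N (fseries_snd hF) F20 hz1 hz2).
Qed.

Lemma fmap_eval_Xdvd1 F N z :
  formal_map F -> fixes0 F -> pXdvd 1 z -> pXdvd 1 (fmap_eval i F N z).
Proof. by move=> hF F0 hz; apply: fmap_eval_low => // -[]. Qed.

Variable i0 : {rmorphism K -> A}.
Hypothesis i_const : forall c, i c = (i0 c)%:P.

Lemma pcoef_fmap_eval_low F N k z : formal_map F -> (forall j, (j <= k)%N -> F j = (0, 0)) ->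
  pXdvd 1 z -> (k < N)%N -> pcoef (fmap_eval i F N z) k.+1 = pmap_eval i0 (F k.+1) (pcoef z 1).
Proof.
move=> hF F0 [hz1 hz2] hk.
have F10 j : (j <= k)%N -> fmap_fst F j = 0 by move/F0; rewrite /fmap_fst => ->.
have F20 j : (j <= k)%N -> fmap_snd F j = 0 by move/F0; rewrite /fmap_snd => ->.
rewrite /pcoef /=.
rewrite (coef_fev_low i_const (fseries_fst hF) F10 hz1 hz2 hk).
by rewrite (coef_fev_low i_const (fseries_snd hF) F20 hz1 hz2 hk).
Qed.

Lemma pcoef_pmap_eval_linear P z n : plinear P ->
  pcoef (pmap_eval i P z) n = pmap_eval i0 P (pcoef z n).
Proof. by move=> [h1 h2]; rewrite /pcoef /= !(coef_bev_homog1 i_const). Qed.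

End PowerSeriesPoints.

End FormalMapEvaluation.

Section LineInvariance.
Variable K : fieldType.
Implicit Types (P : bpoly K * bpoly K) (F : fmap K) (v : K * K) (phi : {poly K}).

Definition preserves_line P v := exists c : K, map_eval P v = (c * v.1, c * v.2).

Definition reflects_line P v := forall (a : K * K) (c : K),
  pmap_eval idfun P a = (c * v.1, c * v.2) -> exists d : K, a = (d * v.1, d * v.2).

Definition line_pt phi v : {poly K} * {poly K} := (phi * v.1%:P, phi * v.2%:P).

Lemma pcoef_line_pt phi v n : pcoef (line_pt phi v) n = (phi`_n * v.1, phi`_n * v.2).
Proof. by rewrite /pcoef /= !coefMC. Qed.

Lemma line_ptD phi psi v : line_pt (phi + psi) v = line_pt phi v + line_pt psi v.
Proof. by rewrite /line_pt /= pairD !mulrDl. Qed.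

Lemma line_ptB phi psi v : line_pt phi v - line_pt psi v = line_pt (phi - psi) v.
Proof. by rewrite /line_pt /=; congr pair; rewrite mulrBl. Qed.

Lemma bev_line j p phi (v1 v2 : K) : homog j p ->
  bev polyC (phi * v1%:P) (phi * v2%:P) p = phi ^+ j * (bev idfun v1 v2 p)%:P.
Proof.
move=> hp; rewrite (bev_homogZ _ _ _ _ hp); congr (_ * _).
by symmetry; apply: (@bev_map _ _ _ idfun polyC polyC).
Qed.

Lemma pmap_eval_line n P phi v : homog n P.1 -> homog n P.2 ->
  pmap_eval polyC P (line_pt phi v) =
  (phi ^+ n * (map_eval P v).1%:P, phi ^+ n * (map_eval P v).2%:P).
Proof.
by move=> h1 h2; rewrite /pmap_eval /= !beval_bev (bev_line _ _ _ h1) (bev_line _ _ _ h2).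
Qed.

Lemma fmap_eval_line F N phi v : formal_map F ->
  (forall j, (j <= N)%N -> preserves_line (F j) v) ->
  exists psi, fmap_eval polyC F N (line_pt phi v) = line_pt psi v.
Proof.
move=> hF; elim: N => [|N IH] hv.
  have [c e] := hv 0%N (leqnn 0); have [h1 h2] := hF 0%N.
  by exists (c%:P); rewrite fmap_eval0 (pmap_eval_line _ _ h1 h2) e /= !expr0 !mul1r !rmorphM.
have [psi e] := IH (fun j hj => hv j (leqW hj)).
have [c ec] := hv N.+1 (leqnn _); have [h1 h2] := hF N.+1.
exists (psi + phi ^+ N.+1 * c%:P).
rewrite fmap_eval_recr e (pmap_eval_line _ _ h1 h2) ec /line_pt /= !rmorphM /=.
by rewrite pairD; congr pair; ring.
Qed.

Lemma coef_fev_line (P : nat -> bpoly K) N j (v1 v2 : K) : fseries P -> (j <= N)%N ->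
  (fev polyC P N ('X * v1%:P) ('X * v2%:P))`_j = bev idfun v1 v2 (P j).
Proof.
move=> hP hj; rewrite /fev coef_sum (bigD1 (Ordinal (hj : j < N.+1)%N)) //= big1 => [|n].
  by rewrite (bev_line _ _ _ (hP j)) coefXnM ltnn subnn coefC addr0.
rewrite -(inj_eq val_inj) /= => hn.
rewrite (bev_line _ _ _ (hP n)) coefXnM coefC subn_eq0.
case: ltnP => // hnj; case: leqP => // hjn.
by move: hn; rewrite eqn_leq hnj hjn.
Qed.

Lemma pcoef_fmap_eval_line F N j v : formal_map F -> (j <= N)%N ->
  pcoef (fmap_eval polyC F N (line_pt 'X v)) j = map_eval (F j) v.
Proof.
move=> hF hj; rewrite /pcoef /map_eval /= !beval_bev.
by rewrite !coef_fev_line //; [apply: fseries_snd | apply: fseries_fst].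
Qed.

End LineInvariance.

Section LinePreimage.
Variable K : fieldType.
Implicit Types (P L M : bpoly K * bpoly K) (v : K * K).

Lemma linear_left_inverse_reflects L M v : plinear L -> plinear M ->
  (forall a, pmap_eval idfun M (pmap_eval idfun L a) = a) -> v <> (0, 0) ->
  preserves_line L v -> reflects_line L v.
Proof.
move=> [hL1 hL2] [hM1 hM2] ML vnz [c]; rewrite map_eval_pmap => Lv a d La.
have Mline e : pmap_eval idfun M (e * v.1, e * v.2) =
    (e * (pmap_eval idfun M v).1, e * (pmap_eval idfun M v).2).
  by rewrite /pmap_eval /= (bev_homogZ _ _ _ _ hM1) (bev_homogZ _ _ _ _ hM2) !expr1.
have Mv : pmap_eval idfun M v = (c^-1 * v.1, c^-1 * v.2).
  have c0 : c != 0.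
    apply/eqP => c0; apply: vnz; rewrite -[v]ML Lv c0 !mul0r.
    exact: pmap_eval_linear0.
  have e := ML v; rewrite Lv Mline in e.
  by rewrite -[in RHS]e /= !mulrA mulVf // !mul1r.
exists (d / c); rewrite -[a]ML La Mline Mv /=.
by congr pair; rewrite mulrA.
Qed.

Variables (Q : fmap K) (N : nat) (G : {poly K} * {poly K}) (psi : {poly K}) (v : K * K).
Hypotheses (hQ : formal_map Q) (hN : (0 < N)%N) (Q1_refl : reflects_line (Q 1%N) v).
Hypothesis Q_line : forall j, (j <= N)%N -> preserves_line (Q j) v.
Hypotheses (hG : pXdvd 1 G) (QG_line : pXdvd N.+1 (fmap_eval polyC Q N G - line_pt psi v)).

(* The t^m coefficient of Q(G) - Q(phi v) is Q_1 applied to the t^m coefficient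
   of G - phi v; the former lies on the line, hence so does the latter. *)
Lemma line_preimage_step m phi : (0 < m <= N)%N -> Xdvd 1 phi ->
  pXdvd m (G - line_pt phi v) ->
  exists phi', Xdvd 1 phi' /\ pXdvd m.+1 (G - line_pt phi' v).
Proof.
move=> /andP [hm hmN] hphi hGm; set e := G - line_pt phi v in hGm.
have hl : pXdvd 1 (line_pt phi v) by split; apply: XdvdMr.
have [pi epi] := fmap_eval_line phi hQ Q_line.
have T := fmap_eval_taylor polyC hQ hN hm hl hGm.
have eG : line_pt phi v + e = G by rewrite /e addrC subrK.
rewrite eG epi in T.
have E : pXdvd m.+1 (pmap_eval polyC (Q 1%N) e - line_pt (psi - pi) v).
  rewrite -line_ptB.
  have -> : pmap_eval polyC (Q 1%N) e - (line_pt psi v - line_pt pi v) =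
    (fmap_eval polyC Q N G - line_pt psi v) -
    (fmap_eval polyC Q N G - line_pt pi v - pmap_eval polyC (Q 1%N) e) by ring.
  by apply: pXdvdB => //; apply: pXdvd_leq QG_line.
have hQ1 : plinear (Q 1%N) by apply: hQ.
move/pcoef_eq/(_ (ltnSn m)): E; rewrite (pcoef_pmap_eval_linear (i0 := idfun)) // pcoef_line_pt.
move=> /Q1_refl [d ed].
exists (phi + d%:P * 'X^m); split.
  by apply/XdvdD/XdvdMl/(Xdvd_leq hm)/Xdvd_Xn.
apply/pXdvdP => n hn.
have -> : G - line_pt (phi + d%:P * 'X^m) v = e - line_pt (d%:P * 'X^m) v.
  by rewrite /e line_ptD; ring.
rewrite pcoefB pcoef_line_pt coefCM coefXn.
move: hn; rewrite ltnS leq_eqVlt => /orP [/eqP ->|hnm].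
  by rewrite ed eqxx mulr1 subrr.
by move/pXdvdP: hGm => -> //; rewrite (ltn_eqF hnm) mulr0 !mul0r subrr.
Qed.

Lemma line_preimage : exists phi, pXdvd N.+1 (G - line_pt phi v).
Proof.
suff [phi [_ h]] : exists phi, Xdvd 1 phi /\ pXdvd N.+1 (G - line_pt phi v) by exists phi.
suff : forall m, (m <= N)%N -> exists phi, Xdvd 1 phi /\ pXdvd m.+1 (G - line_pt phi v).
  by move/(_ N (leqnn N)).
elim=> [|m IH] hm.
  by exists 0; split; [apply: Xdvd0 | rewrite /line_pt !mul0r subr0].
have [phi [hphi h]] := IH (ltnW hm).
by apply: (line_preimage_step _ hphi h); rewrite hm.
Qed.

End LinePreimage.

Section GenericPoint.
Variable K : fieldType.
Implicit Types F : fmap K.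

Lemma pXdvd1_generic : pXdvd 1 (tX K, tY K).
Proof. by split; apply/XdvdMl/Xdvd_Xn. Qed.

Lemma pcoef_generic n : pcoef (tX K, tY K) n = fid K n.
Proof. by rewrite /pcoef /fid /= !coefCM !coefX; case: (n == 1%N); rewrite ?mulr1 ?mulr0. Qed.

Lemma pcoef_fmap_eval_generic F N n : formal_map F -> (n <= N)%N ->
  pcoef (fmap_eval (tconst K) F N (tX K, tY K)) n = F n.
Proof.
by move=> hF hn; rewrite fmap_eval_generic // /pcoef /= !coef_tseries // -surjective_pairing.
Qed.

Lemma fcomp_linear_part Phi Psi : formal_map Phi -> formal_map Psi -> fixes0 Phi -> fixes0 Psi ->
  (forall n, fcomp Phi Psi n = fid K n) -> pcomp (Phi 1%N) (Psi 1%N) = (bX K, bY K).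
Proof.
move=> hPhi hPsi Phi0 Psi0 inv.
have := fmap_eval_inverse (tconst K) hPhi hPsi Psi0 inv (ltn0Sn 0) pXdvd1_generic.
move/pcoef_eq/(_ (ltnSn 1)).
rewrite pcoef_generic (pcoef_fmap_eval_low (i0 := bconst K)) //.
- by rewrite pcoef_fmap_eval_generic.
- by move=> -[].
- exact: fmap_eval_Xdvd1 pXdvd1_generic.
Qed.

End GenericPoint.

Section Conjugation.
Variables (K : fieldType) (f Psi Phi : fmap K) (k : nat).
Hypotheses (hf : formal_map f) (hPsi : formal_map Psi) (hPhi : formal_map Phi).
Hypotheses (Psi0 : fixes0 Psi) (Phi0 : fixes0 Phi) (f_ord : has_order f k.+1).
Hypothesis PhiPsi : forall n, fcomp Phi Psi n = fid K n.

Local Notation T := (tX K, tY K).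
Local Notation ev F := (fmap_eval (tconst K) F k.+1).
Local Notation h := (fcomp f Psi).
Local Notation g := (fcomp Phi h).
Local Notation hT := (pXdvd1_generic K).
Local Notation D := (ev (nonlinear_part f) (ev Psi T)).

Let f0 : fixes0 f. Proof. by case: f_ord => -[]. Qed.

Let hPT : pXdvd 1 (ev Psi T).
Proof. exact: fmap_eval_Xdvd1 hPsi Psi0 hT. Qed.

Let nonlinear_low j : (j <= k)%N -> nonlinear_part f j = 0.
Proof.
case: f_ord => -[f0' _] k1 fmid _ hj; rewrite /nonlinear_part.
case: eqP => // /eqP j1; case: j hj j1 => [|j] hj j1; first by rewrite f0'.
by rewrite fmid // ltnS ltn_neqAle eq_sym j1 /=.
Qed.

Lemma conj_generic_expansion : pXdvd k.+2 (ev g T - (T + pmap_eval (tconst K) (Phi 1%N) D)).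
Proof.
have hnl := formal_map_nonlinear hf.
have hD : pXdvd k.+1 D by apply: fmap_eval_low.
have fP : ev f (ev Psi T) = ev Psi T + D.
  by rewrite fmap_eval_split1 //; case: f_ord => -[_ ->] _ _ _; rewrite pmap_eval_id.
have comp_fPsi := fmap_eval_comp (tconst K) k.+1 hf hPsi Psi0 hT; rewrite fP in comp_fPsi.
have comp_Phih := fmap_eval_comp (tconst K) k.+1 hPhi (formal_map_fcomp f Psi)
  (fixes0_fcomp Psi f0) hT.
have congr_Phi := fmap_eval_congr (tconst K) Phi k.+1 comp_fPsi.
have taylor_Phi := fmap_eval_taylor (tconst K) hPhi (ltn0Sn k) (ltn0Sn k) hPT hD.
have inv_PhiPsi := fmap_eval_inverse (tconst K) hPhi hPsi Psi0 PhiPsi (ltn0Sn k) hT.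
set L := pmap_eval _ _ D in taylor_Phi *.
have -> : ev g T - (T + L) =
  ((ev Phi (ev Psi T + D) - ev Phi (ev Psi T) - L) + (ev Phi (ev Psi T) - T)) -
  ((ev Phi (ev h T) - ev g T) + (ev Phi (ev Psi T + D) - ev Phi (ev h T))) by ring.
by apply: pXdvdB; apply: pXdvdD.
Qed.

Lemma conj_coef_low n : (n <= k.+1)%N ->
  g n = if (n <= k)%N then fid K n else pcomp (Phi 1%N) (pcomp (f k.+1) (Psi 1%N)).
Proof.
move=> hn; have hnl := formal_map_nonlinear hf.
have hD : pXdvd k.+1 D by apply: fmap_eval_low.
have hPhi1 : plinear (Phi 1%N) by apply: hPhi.
rewrite -(pcoef_fmap_eval_generic (formal_map_fcomp _ _) hn).
rewrite (pcoef_eq conj_generic_expansion) ?ltnS // pcoefD pcoef_generic.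
rewrite (pcoef_pmap_eval_linear (i0 := bconst K)) //.
case: leqP => hnk; first by move/pXdvdP: hD => -> //; rewrite pmap_eval_linear0 // addr0.
have -> : n = k.+1 by apply/eqP; rewrite eqn_leq hn hnk.
rewrite (pcoef_fmap_eval_low (i0 := bconst K)) // pcoef_fmap_eval_generic //.
have k1 : (k.+1 == 1%N) = false by case: f_ord => _; case: k.
by rewrite /nonlinear_part /fid k1 add0r.
Qed.

Hypothesis PsiPhi : forall n, fcomp Psi Phi n = fid K n.

Lemma conj_has_order : has_order g k.+1.
Proof.
have k0 : (0 < k)%N by case: f_ord => _; case: k.
have gfid n : (n <= k)%N -> g n = fid K n by move=> hn; rewrite conj_coef_low ?hn // ltnW.
split.
- by split; rewrite gfid.
- by case: f_ord.
- by move=> j /andP [j2 jk]; rewrite (gfid j jk) /fid gtn_eqF.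
- rewrite conj_coef_low // ltnn => g0.
  have L := fcomp_linear_part hPsi hPhi Psi0 Phi0 PsiPhi.
  have hPsi1 : plinear (Psi 1%N) by apply: hPsi.
  by case: f_ord => _ _ _; apply; apply: (linear_conj_eq0 hPsi1 L g0).
Qed.

End Conjugation.

Section ConjugationLine.
Variables (K : fieldType) (f Psi Phi : fmap K) (s : nat) (v : K * K).
Hypotheses (hf : formal_map f) (hPsi : formal_map Psi) (hPhi : formal_map Phi).
Hypotheses (f0 : fixes0 f) (Psi0 : fixes0 Psi) (Phi0 : fixes0 Phi).
Hypothesis PhiPsi : forall n, fcomp Phi Psi n = fid K n.
Hypothesis PsiPhi : forall n, fcomp Psi Phi n = fid K n.
Hypotheses (hs : (0 < s)%N) (vnz : v <> (0, 0)).
Hypothesis f_line : forall j, (j <= s)%N -> preserves_line (f j) v.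
Hypothesis Psi_line : forall n, preserves_line (Psi n) v.

Local Notation ev F := (fmap_eval polyC F s).
Local Notation X := (line_pt 'X v).
Local Notation h := (fcomp f Psi).
Local Notation g := (fcomp Phi h).

Lemma conj_line_expansion : exists phi, pXdvd s.+1 (ev g X - line_pt phi v).
Proof.
have hX : pXdvd 1 X by split; apply/XdvdMr/Xdvd_Xn.
have hh := formal_map_fcomp f Psi; have h0 := fixes0_fcomp Psi f0.
have hH := fmap_eval_Xdvd1 polyC s hh h0 hX.
have hG := fmap_eval_Xdvd1 polyC s (formal_map_fcomp Phi h) (fixes0_fcomp h Phi0) hX.
have [pi epi] := fmap_eval_line (N := s) 'X hPsi (fun j _ => Psi_line j).
have [psi epsi] := fmap_eval_line pi hf f_line.
have comp_fPsi := fmap_eval_comp polyC s hf hPsi Psi0 hX; rewrite epi epsi in comp_fPsi.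
have comp_Phih := fmap_eval_comp polyC s hPhi hh h0 hX.
have congr_Psi := fmap_eval_congr polyC Psi s comp_Phih.
have inv_PsiPhi := fmap_eval_inverse polyC hPsi hPhi Phi0 PsiPhi hs hH.
have QG : pXdvd s.+1 (ev Psi (ev g X) - line_pt psi v).
  have -> : ev Psi (ev g X) - line_pt psi v =
    (ev Psi (ev Phi (ev h X)) - ev h X) - (ev Psi (ev Phi (ev h X)) - ev Psi (ev g X)) -
    (line_pt psi v - ev h X) by ring.
  exact: pXdvdB (pXdvdB inv_PsiPhi congr_Psi) comp_fPsi.
have ML a : pmap_eval idfun (Phi 1%N) (pmap_eval idfun (Psi 1%N) a) = a.
  by rewrite -pmap_eval_comp (fcomp_linear_part hPhi hPsi Phi0 Psi0 PhiPsi) pmap_eval_id.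
have refl := linear_left_inverse_reflects (hPsi 1%N) (hPhi 1%N) ML vnz (Psi_line 1%N).
exact: line_preimage hPsi hs refl (fun j _ => Psi_line j) hG QG.
Qed.

Lemma conj_preserves_line j : (j <= s)%N -> preserves_line (g j) v.
Proof.
move=> hj; have [phi e] := conj_line_expansion.
exists phi`_j; rewrite -(pcoef_fmap_eval_line _ (formal_map_fcomp Phi h) hj).
by rewrite (pcoef_eq e) ?ltnS // pcoef_line_pt.
Qed.

End ConjugationLine.

Lemma order_preserves_line (K : fieldType) (f : fmap K) k s v : has_order f k.+1 ->
  (forall j, (k.+1 <= j <= s)%N -> char_dir (f j) v) ->
  forall j, (j <= s)%N -> preserves_line (f j) v.
Proof.
case=> -[f0 f1] _ fmid _ f_char j hj.
case: (ltnP k j) => hkj; first by case: (f_char j (introT andP (conj hkj hj))).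
case: j hj hkj => [|[|j]] hj hkj.
- by exists 0; rewrite f0 map_eval_pmap /pmap_eval /= !rmorph0 !mul0r.
- by exists 1; rewrite f1 map_eval_pmap /pmap_eval /= bevX bevY !mul1r.
- by exists 0; rewrite fmid ?map_eval_pmap /pmap_eval /= ?rmorph0 ?mul0r.
Qed.

Unset Implicit Arguments. Set Strict Implicit.

Theorem lemma2p2 (K : fieldType) (f Psi Phi : fmap K) (k s : nat) (v : K * K) :
  formal_map f -> formal_map Psi -> formal_map Phi ->
  tangent_id f -> has_order f k.+1 -> (k.+1 <= s)%N ->
  (forall j, (k.+1 <= j <= s)%N -> char_dir (f j) v) ->
  fixes0 Psi -> fixes0 Phi ->
  (forall n, fcomp Phi Psi n = fid K n) ->
  (forall n, fcomp Psi Phi n = fid K n) ->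
  (forall n, exists c : K, map_eval (Psi n) v = (c * v.1, c * v.2)) ->
  char_dir_deg (fcomp Phi (fcomp f Psi)) s v.
Proof.
move=> hf hPsi hPhi _ f_ord hks f_char Psi0 Phi0 PhiPsi PsiPhi Psi_line.
have f0 : fixes0 f by case: f_ord => -[].
exists k; split=> // [|j hj]; first exact: conj_has_order.
have [vnz _] := f_char j hj.
split=> //; apply: (conj_preserves_line (s := s)) => //; last by case/andP: hj.
- exact: leq_trans (ltn0Sn k) hks.
- exact: order_preserves_line f_ord f_char.
Qed.
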